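(* For all $f,g\in\mathcal{S}(\Omega)$, \[f\cdot g=f\cdot g^\circ_s+\mathrm{im}\,(f\cdot g'_s)\] in $\Omega\setminus\mathbb{R}$, where $\mathrm{im}\,(f\cdot g'_s)$ denotes $x\mapsto\mathrm{im}(x)\,(f\cdot g'_s)(x)$. Moreover, for all $x\in\Omega\setminus\mathbb{R}$, \[(f\cdot g)(x)=f(x)\,g^\circ_s(x)+\mathrm{im}(x)\big(f(x)\,g'_s(x)\big)-\big(\mathrm{im}(x),f'_s(x),g(x^c)\big).\]
   Context: Let $A$ be a finite-dimensional real algebra with unit $1$ ($\mathbb{R}$ identified with $\mathbb{R}1$) which is alternative (the associator $(x,y,z)=(xy)z-x(yz)$ is alternating), with a $^*$-involution $x\mapsto x^c$ (real linear, $(x^c)^c=x$, $(xy)^c=y^cx^c$, $r^c=r$ for $r\in\mathbb{R}$). Let $t(x)=x+x^c$, $n(x)=xx^c$, $\mathbb{S}_A=\{J\in A:t(J)=0,n(J)=1\}$ (assumed non-empty), $Q_A=\mathbb{R}\cup\{x\in A:t(x),n(x)\in\mathbb{R},\ 4n(x)>t(x)^2\}$; every $x\in Q_A$ is $\alpha+\beta J$ with $\alpha,\beta\in\mathbb{R}$, $J\in\mathbb{S}_A$, and $x^c=\alpha-\beta J$; $\mathrm{re}(x)=t(x)/2$, $\mathrm{im}(x)=x-\mathrm{re}(x)$. Let $D\subseteq\mathbb{C}$ be non-empty and invariant under complex conjugation and $\Omega=\{\alpha+\beta J:\alpha+i\beta\in D,\ J\in\mathbb{S}_A\}$. Let $A_{\mathbb{C}}=\{a+\imath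 b:a,b\in A\}$ with product $(a+\imath b)(a'+\imath b')=aa'-bb'+\imath(ab'+ba')$ and conjugation $\overline{a+\imath b}=a-\imath b$. A stem function is $F=F_1+\imath F_2:D\to A_{\mathbb{C}}$ with $F(\bar z)=\overline{F(z)}$; it induces the slice function $f=\mathcal{I}(F)$, $f(\alpha+\beta J)=F_1(\alpha+i\beta)+JF_2(\alpha+i\beta)$; $\mathcal{S}(\Omega)$ is the set of slice functions on $\Omega$ and the slice product is $f\cdot g=\mathcal{I}(FG)$ (pointwise product of stem functions). The spherical value of $f$ is the slice function $f^\circ_s(x)=\frac12(f(x)+f(x^c))$ on $\Omega$ and the spherical derivative is the slice function $f'_s(x)=\frac12\mathrm{im}(x)^{-1}(f(x)-f(x^c))$ on $\Omega\setminus\mathbb{R}$; slice products of functions with different domains are taken on the intersection of the domains. *)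

From HB Require Import structures.
From mathcomp Require Import all_boot all_order all_algebra.
From mathcomp Require Import reals.
From Stdlib Require Import ClassicalEpsilon.
Set Implicit Arguments. Unset Strict Implicit. Unset Printing Implicit Defensive.
Import Order.TTheory GRing.Theory Num.Theory.
Local Open Scope ring_scope.

(* A finite-dimensional real (vectType) space A with a bilinear unital
   alternative product and a *-involution; R is identified with R*:1. *)
Record altStarAlg (R : realType) (A : vectType R) := AltStarAlg {
  amul : A -> A -> A;
  aone : A;
  acj  : A -> A;
  one_neq0 : aone != 0;
  mulDl : forall (a : R) x y z, amul (a *: x + y) z = a *: amul x z + amul y z;
  mulDr : forall (a : R) x y z, amul x (a *: y + z) = a *: amul x y + amul x z;
  mul1l : forall x, amul aone x = x;
  mul1r : forall x, amul x aone = x;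
  alt_xxy : forall x y, amul (amul x x) y - amul x (amul x y) = 0;
  alt_xyx : forall x y, amul (amul x y) x - amul x (amul y x) = 0;
  alt_yxx : forall x y, amul (amul y x) x - amul y (amul x x) = 0;
  cj_lin : forall (a : R) x y, acj (a *: x + y) = a *: acj x + acj y;
  cjK : forall x, acj (acj x) = x;
  cj_mul : forall x y, acj (amul x y) = amul (acj y) (acj x);
  cj_real : forall a : R, acj (a *: aone) = a *: aone
}.

Section Defs.
Variables (R : realType) (A : vectType R) (M : altStarAlg A).

Local Notation "x ** y" := (amul M x y) (at level 40, left associativity).

Definition assoc (x y z : A) : A := (x ** y) ** z - x ** (y ** z).
Definition tr (x : A) : A := x + acj M x.
Definition nrm (x : A) : A := x ** acj M x.
Definition inS (J : A) : Prop := tr J = 0 /\ nrm J = aone M.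
Definition repart (x : A) : A := 2^-1 *: tr x.
Definition impart (x : A) : A := x - repart x.
Definition ainv (y : A) : A :=
  epsilon (inhabits 0) (fun z => y ** z = aone M /\ z ** y = aone M).

Definition pt (a b : R) (J : A) : A := a *: aone M + b *: J.

(* D subset C is encoded as a predicate on pairs (alpha, beta) ~ alpha + i beta *)
Definition in_dom (D : R -> R -> Prop) (x : A) : Prop :=
  exists a b J, D a b /\ inS J /\ x = pt a b J.
(* D minus the real axis (so that Omega_{nonreal D} = Omega_D \ R) *)
Definition nonreal (D : R -> R -> Prop) : R -> R -> Prop :=
  fun a b => D a b /\ b != 0.

(* stem functions F = F1 + i F2 : D -> A_C, encoded as pairs (F1, F2) *)
Definition is_stem (D : R -> R -> Prop) (F : R -> R -> A * A) : Prop :=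
  forall a b, D a b -> F a (- b) = ((F a b).1, - (F a b).2).

Definition slice_with (D : R -> R -> Prop) (f : A -> A) (F : R -> R -> A * A) :=
  is_stem D F /\
  forall a b J, D a b -> inS J -> f (pt a b J) = (F a b).1 + J ** (F a b).2.

Definition is_slice (D : R -> R -> Prop) (f : A -> A) : Prop :=
  exists F, slice_with D f F.

Definition ind (D : R -> R -> Prop) (F : R -> R -> A * A) (x : A) : A :=
  let t := epsilon (inhabits (0, 0, 0))
             (fun t : R * R * A => D t.1.1 t.1.2 /\ inS t.2 /\ x = pt t.1.1 t.1.2 t.2) in
  (F t.1.1 t.1.2).1 + t.2 ** (F t.1.1 t.1.2).2.

Definition stem_of (D : R -> R -> Prop) (f : A -> A) : R -> R -> A * A :=
  epsilon (inhabits (fun _ _ => (0, 0))) (fun F => slice_with D f F).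

Definition stem_mul (F G : R -> R -> A * A) : R -> R -> A * A :=
  fun a b => ((F a b).1 ** (G a b).1 - (F a b).2 ** (G a b).2,
              (F a b).1 ** (G a b).2 + (F a b).2 ** (G a b).1).

Definition slice_prod (D : R -> R -> Prop) (f g : A -> A) : A -> A :=
  ind D (stem_mul (stem_of D f) (stem_of D g)).

Definition sph_val (f : A -> A) (x : A) : A := 2^-1 *: (f x + f (acj M x)).
Definition sph_der (f : A -> A) (x : A) : A :=
  2^-1 *: (ainv (impart x) ** (f x - f (acj M x))).

End Defs.

From Pilot Require Import Defs.
From HB Require Import structures.
From mathcomp Require Import all_boot all_order all_algebra.
From mathcomp Require Import ssrAC reals lra.
From Stdlib Require Import ClassicalEpsilon.
Set Implicit Arguments. Unset Strict Implicit. Unset Printing Implicit Defensive.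
Import Order.TTheory GRing.Theory Num.Theory.
Local Open Scope ring_scope.

(* Write x = a + bJ with b <> 0 and let F1 + iF2, G1 + iG2 be the values at
   a + ib of stem functions of f and g.  Then im x = bJ, g°s(x) = G1,
   g's(x) = b^-1 G2, f's(x) = b^-1 F2, f(x) = F1 + JF2, g(x^c) = G1 - JG2 and
   (f.g)(x) = F1G1 - F2G2 + J(F1G2 + F2G1).  The first identity then only uses
   bilinearity and J^2 = -1.  For the second, the defect of associativity is
   the associator (J, F2, G1 - JG2), and the identity closes because
   J((JF2)G2) + (J, F2, JG2) = -F2G2, which follows from the Teichmuller
   identity in an alternative algebra in which J^2 = -1. *)

Section AltStarAlgebra.
Variables (R : realType) (A : vectType R) (M : altStarAlg A).
Local Notation "x ** y" := (amul M x y) (at level 40, left associativity).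
Local Notation e := (aone M).
Local Notation cj := (acj M).

Lemma amulDl x y z : (x + y) ** z = x ** z + y ** z.
Proof. by have := mulDl M 1 x y z; rewrite !scale1r. Qed.

Lemma amulDr x y z : x ** (y + z) = x ** y + x ** z.
Proof. by have := mulDr M 1 x y z; rewrite !scale1r. Qed.

Lemma amul0l z : 0 ** z = 0.
Proof. by have := mulDl M (-1) 0 0 z; rewrite !scaleN1r !addNr. Qed.

Lemma amul0r z : z ** 0 = 0.
Proof. by have := mulDr M (-1) z 0 0; rewrite !scaleN1r !addNr. Qed.

Lemma amulZl (c : R) x z : (c *: x) ** z = c *: (x ** z).
Proof. by have := mulDl M c x 0 z; rewrite !addr0 amul0l addr0. Qed.

Lemma amulZr (c : R) x z : z ** (c *: x) = c *: (z ** x).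
Proof. by have := mulDr M c z x 0; rewrite !addr0 amul0r addr0. Qed.

Lemma amulNl x z : (- x) ** z = - (x ** z).
Proof. by rewrite -scaleN1r amulZl scaleN1r. Qed.

Lemma amulNr x z : z ** (- x) = - (z ** x).
Proof. by rewrite -scaleN1r amulZr scaleN1r. Qed.

Lemma amulBl x y z : (x - y) ** z = x ** z - y ** z.
Proof. by rewrite amulDl amulNl. Qed.

Lemma amulBr x y z : z ** (x - y) = z ** x - z ** y.
Proof. by rewrite amulDr amulNr. Qed.

Lemma acj0 : cj 0 = 0.
Proof. by have := cj_lin M (-1) 0 0; rewrite !scaleN1r !addNr. Qed.

Lemma acjD x y : cj (x + y) = cj x + cj y.
Proof. by have := cj_lin M 1 x y; rewrite !scale1r. Qed.

Lemma acjZ (c : R) x : cj (c *: x) = c *: cj x.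
Proof. by have := cj_lin M c x 0; rewrite !addr0 acj0 addr0. Qed.

Lemma acj1 : cj e = e.
Proof. by have := cj_real M 1; rewrite !scale1r. Qed.

Lemma scale_half_double (x : A) : 2^-1 *: (x + x) = x.
Proof. by rewrite -mulr2n -scaler_nat scalerA mulVf ?scale1r ?pnatr_eq0. Qed.

Lemma inS_acj J : inS M J -> cj J = - J.
Proof. by case; rewrite /tr => /eqP; rewrite addrC addr_eq0 => /eqP. Qed.

Lemma inS_mulJJ J : inS M J -> J ** J = - e.
Proof. by move=> SJ; case: (SJ) => _; rewrite /nrm inS_acj // amulNr => <-; rewrite opprK. Qed.

Lemma inS_mulKl J y : inS M J -> J ** (J ** y) = - y.
Proof.
move=> SJ; have /eqP := alt_xxy M J y; rewrite subr_eq0 => /eqP <-.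
by rewrite inS_mulJJ // amulNl mul1l.
Qed.

Local Notation asc := (assoc M).

Lemma assoc_xxy x y : asc x x y = 0.
Proof. exact: alt_xxy. Qed.

Lemma assoc_yxx x y : asc y x x = 0.
Proof. exact: alt_yxx. Qed.

Lemma assocDm x y y' z : asc x (y + y') z = asc x y z + asc x y' z.
Proof. by rewrite /assoc !amulDr !amulDl !amulDr opprD addrACA. Qed.

Lemma assocDr x y z z' : asc x y (z + z') = asc x y z + asc x y z'.
Proof. by rewrite /assoc !amulDr opprD addrACA. Qed.

Lemma assocZl (c : R) x y z : asc (c *: x) y z = c *: asc x y z.
Proof. by rewrite /assoc !amulZl scalerBr. Qed.

Lemma assocZm (c : R) x y z : asc x (c *: y) z = c *: asc x y z.
Proof. by rewrite /assoc !amulZl !amulZr amulZl scalerBr. Qed.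

Lemma assocNr x y z : asc x y (- z) = - asc x y z.
Proof. by rewrite -scaleN1r /assoc !amulZr -scalerBr scaleN1r. Qed.

Lemma assoc_scale1l (c : R) y z : asc (c *: e) y z = 0.
Proof. by rewrite assocZl /assoc !mul1l subrr scaler0. Qed.

Lemma assoc_swapr x y z : asc x z y = - asc x y z.
Proof.
have := assoc_yxx (y + z) x; rewrite assocDm !assocDr.
by rewrite !assoc_yxx add0r addr0 => /eqP; rewrite addrC addr_eq0 => /eqP.
Qed.

Lemma amulA_assoc x y z : (x ** y) ** z = x ** (y ** z) + asc x y z.
Proof. by rewrite /assoc addrC subrK. Qed.

Lemma teichmuller w x y z :
  asc (w ** x) y z - asc w (x ** y) z + asc w x (y ** z)
  = w ** asc x y z + asc w x y ** z.
Proof.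
rewrite /assoc amulBr amulBl.
set p3 := (w ** (x ** y)) ** z; set p4 := w ** ((x ** y) ** z).
by rewrite opprB addrACA subrK [LHS]addrC (addrAC p4) -addrA [- p3 + _]addrC.
Qed.

Lemma inS_assoc_mull J p q : inS M J -> asc J (J ** p) q = - (J ** asc J p q).
Proof.
move=> SJ; have := teichmuller J J p q.
rewrite inS_mulJJ // -scaleN1r assoc_scale1l !assoc_xxy amul0l sub0r !addr0.
by move=> <-; rewrite opprK.
Qed.

Lemma inS_mul_twist J u v : inS M J ->
  J ** ((J ** u) ** v) + asc J u (J ** v) = - (u ** v).
Proof.
move=> SJ.
rewrite amulA_assoc amulDr inS_mulKl // (assoc_swapr J (J ** v)).
by rewrite inS_assoc_mull // (assoc_swapr J u) amulNr !opprK addrK.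
Qed.

Lemma scale1_inj (c d : R) : c *: e = d *: e -> c = d.
Proof.
move=> h; apply/eqP; rewrite -subr_eq0; apply/eqP.
have /eqP : (c - d) *: e = 0 by rewrite scalerBl h subrr.
by rewrite scaler_eq0 (negbTE (one_neq0 M)) orbF => /eqP.
Qed.

Lemma acj_pt a b J : inS M J -> cj (pt M a b J) = pt M a (- b) J.
Proof. by move=> SJ; rewrite /pt acjD !acjZ acj1 inS_acj // scaleNr scalerN. Qed.

Lemma tr_pt a b J : inS M J -> tr M (pt M a b J) = (a + a) *: e.
Proof. by move=> SJ; rewrite /tr acj_pt // /pt scaleNr scalerDl addrACA subrr addr0. Qed.

Lemma impart_pt a b J : inS M J -> impart M (pt M a b J) = b *: J.
Proof.
by move=> SJ; rewrite /impart /repart tr_pt // scalerDl scale_half_double /pt addrC addKr.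
Qed.

Lemma pt_inj a b J a' b' J' : inS M J -> inS M J' -> b != 0 ->
  pt M a b J = pt M a' b' J' ->
  a' = a /\ ((b' = b /\ J' = J) \/ (b' = - b /\ J' = - J)).
Proof.
move=> SJ SJ' bnz h.
have ha : a' = a by have := congr1 (tr M) h; rewrite !tr_pt // => /scale1_inj; lra.
subst a'; split => //.
have hb : b *: J = b' *: J' by move: h; rewrite /pt => /addrI.
have := congr1 (fun y => y ** y) hb; rewrite /= !amulZl !amulZr !scalerA !inS_mulJJ //.
rewrite !scalerN => /oppr_inj /scale1_inj hbb.
have /orP [] : (b' - b == 0) || (b' + b == 0) by rewrite -mulf_eq0; apply/eqP; lra.
  rewrite subr_eq0 => /eqP eb; subst b'; left; split => //; exact: (scalerI bnz).
rewrite addr_eq0 => /eqP eb; subst b'; right; split => //; apply: (scalerI bnz).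
by rewrite scalerN hb scaleNr opprK.
Qed.

Lemma ainv_scale_inS (b : R) J : inS M J -> b != 0 -> ainv M (b *: J) = (- b^-1) *: J.
Proof.
move=> SJ bnz; rewrite /ainv.
set z := epsilon _ _.
have [bJz _] : (b *: J) ** z = e /\ z ** (b *: J) = e.
  apply: (epsilon_spec _ (fun z => (b *: J) ** z = e /\ z ** (b *: J) = e)).
  exists ((- b^-1) *: J).
  rewrite !amulZl !amulZr !scalerA inS_mulJJ // mulrN mulNr mulfV // mulVf //.
  by rewrite scaleN1r opprK.
have /(congr1 (amul M J)) : J ** z = b^-1 *: e.
  by rewrite -bJz amulZl scalerA mulVf // scale1r.
by rewrite inS_mulKl // amulZr Defs.mul1r => /eqP; rewrite eqr_oppLR -scaleNr => /eqP.
Qed.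

Lemma stem_prod_split J (b : R) f1 f2 g1 g2 : inS M J -> b != 0 ->
  (f1 ** g1 - f2 ** g2) + J ** (f1 ** g2 + f2 ** g1) =
  (f1 ** g1 + J ** (f2 ** g1))
  + (b *: J) ** (f1 ** (b^-1 *: g2) + J ** (f2 ** (b^-1 *: g2))).
Proof.
move=> SJ bnz; rewrite !amulZr -scalerDr amulZl amulZr scalerA mulfV // scale1r.
by rewrite !amulDr inS_mulKl // addrACA [RHS]addrACA (addrC (J ** (f2 ** g1))).
Qed.

Lemma stem_prod_assoc J (b : R) f1 f2 g1 g2 : inS M J -> b != 0 ->
  (f1 ** g1 - f2 ** g2) + J ** (f1 ** g2 + f2 ** g1) =
  (f1 + J ** f2) ** g1 + (b *: J) ** ((f1 + J ** f2) ** (b^-1 *: g2))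
  - asc (b *: J) (b^-1 *: f2) (g1 - J ** g2).
Proof.
move=> SJ bnz.
rewrite amulZl !amulZr scalerA mulfV // scale1r assocZl assocZm scalerA mulfV // scale1r.
rewrite assocDr assocNr opprD opprK addrA amulDl (amulA_assoc J f2 g1).
rewrite (addrA (f1 ** g1)) (addrAC _ (asc J f2 g1)) addrK.
rewrite -(inS_mul_twist f2 g2 SJ) amulDl !amulDr.
by rewrite [LHS](AC ((1*2)*2) ((1*5*(4*2))*3)).
Qed.

End AltStarAlgebra.

Section SliceFunctions.
Variables (R : realType) (A : vectType R) (M : altStarAlg A) (D : R -> R -> Prop).
Hypothesis HDc : forall a b, D a b -> D a (- b).
Local Notation "x ** y" := (amul M x y) (at level 40, left associativity).

(* x = a + bJ determines (b, J) up to sign, and the stem condition makes the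
   formula insensitive to that sign. *)
Lemma ind_pt K a b J : is_stem D K -> D a b -> b != 0 -> inS M J ->
  ind M D K (pt M a b J) = (K a b).1 + J ** (K a b).2.
Proof.
move=> sK Dab bnz SJ; rewrite /ind.
set P := fun t : R * R * A => D t.1.1 t.1.2 /\ inS M t.2 /\ pt M a b J = pt M t.1.1 t.1.2 t.2.
have := epsilon_spec (inhabits (0, 0, 0)) P (ex_intro _ (a, b, J) (conj Dab (conj SJ erefl))).
move: (epsilon _ P) => [[a' b'] J']; rewrite {}/P /= => -[_ [SJ' /(pt_inj SJ SJ' bnz)]].
case=> -> [[-> ->] // | [-> ->]].
by rewrite (sK a b Dab) /= amulNl amulNr opprK.
Qed.

Lemma slice_pt h K a b J : slice_with M D h K -> D a b -> inS M J ->
  h (pt M a b J) = (K a b).1 + J ** (K a b).2.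
Proof. by move=> [_ hK] Dab SJ; rewrite hK. Qed.

Lemma slice_pt_conj h K a b J : slice_with M D h K -> D a b -> inS M J ->
  h (pt M a (- b) J) = (K a b).1 - J ** (K a b).2.
Proof. by move=> [sK hK] Dab SJ; rewrite (hK _ _ _ (HDc Dab) SJ) (sK _ _ Dab) /= amulNr. Qed.

Lemma stem_unique h K K' J a b : inS M J ->
  slice_with M D h K -> slice_with M D h K' -> D a b -> K a b = K' a b.
Proof.
move=> SJ sK sK' Dab.
have e1 := slice_pt sK Dab SJ; rewrite (slice_pt sK' Dab SJ) in e1.
have e2 := slice_pt_conj sK Dab SJ; rewrite (slice_pt_conj sK' Dab SJ) in e2.
have h1 : (K a b).1 = (K' a b).1.
  have := congr2 (fun p q => 2^-1 *: (p + q)) e1 e2.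
  by rewrite /= addrACA subrr addr0 [in RHS]addrACA subrr addr0 !scale_half_double.
have h2 : (K a b).2 = (K' a b).2.
  move: e1; rewrite h1 => /addrI /(congr1 (amul M J)).
  by rewrite !inS_mulKl // => /oppr_inj.
by move: h1 h2; case: (K a b); case: (K' a b) => ? ? ? ? /= -> ->.
Qed.

Lemma stem_of_eq h K J a b : inS M J -> slice_with M D h K -> D a b ->
  stem_of M D h a b = K a b.
Proof.
move=> SJ sK Dab; apply: (stem_unique SJ _ sK Dab).
by apply: epsilon_spec; exists K.
Qed.

Lemma is_stem_mul K K' : is_stem D K -> is_stem D K' -> is_stem D (stem_mul M K K').
Proof.
move=> sK sK' a b Dab; rewrite /stem_mul (sK _ _ Dab) (sK' _ _ Dab) /=.
by rewrite !amulNl !amulNr opprK opprD.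
Qed.

Lemma slice_prod_pt f g F G a b J :
  slice_with M D f F -> slice_with M D g G -> D a b -> b != 0 -> inS M J ->
  slice_prod M D f g (pt M a b J) = (stem_mul M F G a b).1 + J ** (stem_mul M F G a b).2.
Proof.
move=> sF sG Dab bnz SJ.
have sF' : slice_with M D f (stem_of M D f) by apply: epsilon_spec; exists F.
have sG' : slice_with M D g (stem_of M D g) by apply: epsilon_spec; exists G.
rewrite /slice_prod (ind_pt (is_stem_mul sF'.1 sG'.1) Dab bnz SJ).
by rewrite /stem_mul !(stem_of_eq SJ sF Dab) !(stem_of_eq SJ sG Dab).
Qed.

Lemma sph_val_pt h K a b J : slice_with M D h K -> D a b -> inS M J ->
  sph_val M h (pt M a b J) = (K a b).1.
Proof.
move=> sK Dab SJ; rewrite /sph_val acj_pt // (slice_pt sK Dab SJ) (slice_pt_conj sK Dab SJ).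
by rewrite addrACA subrr addr0 scale_half_double.
Qed.

Lemma sph_der_pt h K a b J : slice_with M D h K -> D a b -> b != 0 -> inS M J ->
  sph_der M h (pt M a b J) = b^-1 *: (K a b).2.
Proof.
move=> sK Dab bnz SJ.
rewrite /sph_der acj_pt // (slice_pt sK Dab SJ) (slice_pt_conj sK Dab SJ) opprB addrC addrA subrK.
rewrite impart_pt // ainv_scale_inS // amulZl amulDr inS_mulKl // scalerA mulrC -scalerA.
by rewrite scale_half_double scaleNr scalerN opprK.
Qed.

Lemma slice_with_sph_val g G : slice_with M D g G ->
  slice_with M D (sph_val M g) (fun a b => ((G a b).1, 0)).
Proof.
move=> sG; split=> [a b Dab | a b J Dab SJ] /=.
  by rewrite oppr0 (sG.1 _ _ Dab).
by rewrite (sph_val_pt sG Dab SJ) amul0r addr0.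
Qed.

Lemma slice_with_nonreal h K : slice_with M D h K -> slice_with M (nonreal D) h K.
Proof. by case=> sK hK; split=> [a b [Dab _] | a b J [Dab _]]; [apply: sK | apply: hK]. Qed.

Lemma nonreal_conj a b : nonreal D a b -> nonreal D a (- b).
Proof. by case=> Dab bnz; split; [apply: HDc | rewrite oppr_eq0]. Qed.

Lemma slice_with_sph_der g G : slice_with M D g G ->
  slice_with M (nonreal D) (sph_der M g) (fun a b => (b^-1 *: (G a b).2, 0)).
Proof.
move=> sG; split=> [a b [Dab _] | a b J [Dab bnz] SJ] /=.
  by rewrite oppr0 (sG.1 _ _ Dab) /= invrN scaleNr scalerN opprK.
by rewrite (sph_der_pt sG Dab bnz SJ) amul0r addr0.
Qed.

End SliceFunctions.

Theorem theorem3p4 (R : realType) (A : vectType R) (M : altStarAlg A)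
  (D : R -> R -> Prop)
  (HDne : exists a b, D a b)
  (HDc : forall a b, D a b -> D a (- b))
  (HS : exists J, inS M J)
  (f g : A -> A) (Hf : is_slice M D f) (Hg : is_slice M D g) :
  (forall x, in_dom M (nonreal D) x ->
     slice_prod M D f g x =
       slice_prod M D f (sph_val M g) x
       + amul M (impart M x) (slice_prod M (nonreal D) f (sph_der M g) x))
  /\
  (forall x, in_dom M (nonreal D) x ->
     slice_prod M D f g x =
       amul M (f x) (sph_val M g x)
       + amul M (impart M x) (amul M (f x) (sph_der M g x))
       - assoc M (impart M x) (sph_der M f x) (g (acj M x))).
Proof.
have [[F sF] [G sG]] := (Hf, Hg).
split=> x [a [b [J [[Dab bnz] [SJ ->]]]]];
  rewrite (slice_prod_pt HDc sF sG Dab bnz SJ) impart_pt //.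
- rewrite (slice_prod_pt HDc sF (slice_with_sph_val HDc sG) Dab bnz SJ).
  rewrite (slice_prod_pt (nonreal_conj HDc) (slice_with_nonreal sF)
             (slice_with_sph_der HDc sG) (conj Dab bnz) bnz SJ).
  rewrite /stem_mul /= !amul0r !subr0 !add0r.
  exact: stem_prod_split.
- rewrite (slice_pt sF Dab SJ) (sph_val_pt HDc sG Dab SJ) acj_pt // (slice_pt_conj HDc sG Dab SJ).
  rewrite (sph_der_pt HDc sG Dab bnz SJ) (sph_der_pt HDc sF Dab bnz SJ).
  exact: stem_prod_assoc.
Qed.
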